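(* Let $n\ge2$, let $\mathcal{P}$ be a distribution on $\mathcal{Z}=\mathcal{X}\times\mathcal{Y}$, let $h:\mathcal{Z}^{n-1}\times\mathcal{X}\to\mathbb{R}^d$ be a deterministic prediction function having $\beta$-train stability and $\beta_1$-test stability, and let $\ell:\mathbb{R}^d\times\mathcal{Y}\to[0,1]$ be $L$-Lipschitz in its first argument: $|\ell(r,y)-\ell(r',y)|\le L\|r-r'\|$. Then \[ \mathrm{gen}(h)\le\sqrt{4c_nL\sqrt{nd\,(n\beta^2+2\beta_1^2)}},\qquad c_n=\frac{n}{n-1}. \]
   Context: For datasets $z^{n-1},\hat z^{n-1}\in\mathcal{Z}^{n-1}$ differing in at most one entry, say $z_1\ne\hat z_1$ and $z_k=\hat z_k$ for $k\ne1$: $h$ has $\beta$-train stability if $\|h(z^{n-1},x_k)-h(\hat z^{n-1},x_k)\|^2\le\beta^2$ for all $k\ne1$ (where $x_k$ is the input of $z_k$), for all such pairs; and $\beta_1$-test stability if $\|h(z^{n-1},x')-h(\hat z^{n-1},x')\|^2\le\beta_1^2$ for all $x'\in\mathcal{X}$ and all such pairs. With true loss $\mathcal{L}(h,z^m)=\mathbb{E}_{(x',y')\sim\mathcal{P}}\ell(h(z^m,x'),y')$ and empirical loss $\widehat{\mathcal{L}}(h,z^m)=\frac1m\sum_{i}\ell(h(z^m,x_i),y_i)$, $\mathrm{gen}(h)=|\mathbb{E}_{Z^{n-1}\sim\mathcal{P}^{n-1}}[\widehat{\mathcal{L}}(h,Z^{n-1})-\mathcal{L}(h,Z^{n-1})]|$.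 *)

From HB Require Import structures.
From mathcomp Require Import all_boot all_order all_algebra.
From mathcomp Require Import all_classical all_reals all_analysis.
Set Implicit Arguments. Unset Strict Implicit. Unset Printing Implicit Defensive.
Import Order.TTheory GRing.Theory Num.Theory.
Local Open Scope classical_set_scope.
Local Open Scope ring_scope.

Definition eucl_norm {R : realType} {d : nat} (v : 'rV[R]_d) : R :=
  Num.sqrt (\sum_(i < d) (v ord0 i) ^+ 2).

(* Expectation over Z^m ~ P^m of a real function of an m-tuple, written as the
   iterated integral (coordinate 0 outermost).  For bounded measurable f this
   is the integral against the m-fold product measure P^m (Fubini). *)
Fixpoint iter_expect {dZ : measure_display} {Z : measurableType dZ}
  {R : realType} (P : probability Z R) (m : nat) : (m.-tuple Z -> R) -> R :=
  match m with
  | 0 => fun f => f [tuple]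
  | m'.+1 => fun f =>
      Rintegral P setT (fun z => iter_expect P (fun t : m'.-tuple Z => f [tuple of z :: t]))
  end.

Section learning.
Context {dX dY : measure_display} {X : measurableType dX} {Y : measurableType dY}
  {R : realType} {d : nat}.
Local Notation Z := (X * Y)%type.

Definition emp_loss (m : nat) (h : m.-tuple Z -> X -> 'rV[R]_d)
  (l : 'rV[R]_d -> Y -> R) (t : m.-tuple Z) : R :=
  m%:R^-1 * \sum_(i < m) l (h t (tnth t i).1) (tnth t i).2.

Definition true_loss (P : probability Z R) (m : nat)
  (h : m.-tuple Z -> X -> 'rV[R]_d) (l : 'rV[R]_d -> Y -> R) (t : m.-tuple Z) : R :=
  Rintegral P setT (fun z : Z => l (h t z.1) z.2).

Definition gen (P : probability Z R) (m : nat)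
  (h : m.-tuple Z -> X -> 'rV[R]_d) (l : 'rV[R]_d -> Y -> R) : R :=
  `| iter_expect P (fun t => emp_loss h l t - true_loss P h l t) |.

Definition differ_at_most_at (m : nat) (t t' : m.-tuple Z) (i : 'I_m) : Prop :=
  forall k : 'I_m, k != i -> tnth t k = tnth t' k.

Definition train_stable (m : nat) (h : m.-tuple Z -> X -> 'rV[R]_d) (beta : R) :=
  forall (t t' : m.-tuple Z) (i : 'I_m), differ_at_most_at t t' i ->
  forall k : 'I_m, k != i ->
    eucl_norm (h t (tnth t k).1 - h t' (tnth t k).1) ^+ 2 <= beta ^+ 2.

Definition test_stable (m : nat) (h : m.-tuple Z -> X -> 'rV[R]_d) (beta1 : R) :=
  forall (t t' : m.-tuple Z) (i : 'I_m), differ_at_most_at t t' i ->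
  forall x' : X, eucl_norm (h t x' - h t' x') ^+ 2 <= beta1 ^+ 2.

End learning.

(* Replace-one symmetrization.  A fresh test point z and the i-th training
   point are i.i.d., so the expected test loss E[l(h(Z, x), y)] equals
   E[l(h(Z^(i<-z), x_i), y_i)], where Z^(i<-z) is Z with its i-th entry replaced
   by z.  The expected gap is therefore the average over i of
   E[l(h(Z, x_i), y_i) - l(h(Z^(i<-z), x_i), y_i)], and test stability with the
   Lipschitz property bounds each term by L sqrt(d beta1^2) (the factor sqrt d
   only matters for d = 0, where the Euclidean norm vanishes).  As the loss
   lies in [0,1], gen(h) <= min(1, L sqrt(d beta1^2)), which is below the square
   root in the statement. *)

From HB Require Import structures.
From mathcomp Require Import all_boot all_order all_algebra.
From mathcomp Require Import all_classical all_reals all_analysis.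
From mathcomp Require Import measurable_realfun lra.
Import Order.TTheory GRing.Theory Num.Theory.
Local Open Scope classical_set_scope.
Local Open Scope ring_scope.
Set Implicit Arguments. Unset Strict Implicit. Unset Printing Implicit Defensive.

Definition tuple_upd (T : Type) m (t : m.-tuple T) (i : 'I_m) (z : T) : m.-tuple T :=
  [tuple (if j == i then z else tnth t j) | j < m].

Lemma tuple_upd0 (T : Type) m (w z : T) (t : m.-tuple T) :
  tuple_upd [tuple of w :: t] ord0 z = [tuple of z :: t].
Proof.
apply: eq_from_tnth => k; rewrite tnth_mktuple.
case: (unliftP ord0 k) => [k' ->|->]; last by rewrite eqxx tnth0.
by rewrite eq_sym (negbTE (neq_lift _ _)) !tnthS.
Qed.

Lemma tuple_updS (T : Type) m (w z : T) (t : m.-tuple T) (j : 'I_m) :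
  tuple_upd [tuple of w :: t] (lift ord0 j) z = [tuple of w :: tuple_upd t j z].
Proof.
apply: eq_from_tnth => k; rewrite tnth_mktuple.
case: (unliftP ord0 k) => [k' ->|->]; last by rewrite (negbTE (neq_lift _ _)) !tnth0.
rewrite (tnthS w (tuple_upd t j z) k') tnth_mktuple (inj_eq (@lift_inj _ ord0)).
by rewrite (tnthS w t k').
Qed.

Lemma measurable_tuple_upd {dZ} (Z : measurableType dZ) m (i : 'I_m) :
  measurable_fun setT (fun p : m.-tuple Z * Z => tuple_upd p.1 i p.2).
Proof.
apply/measurable_fun_tnthP => j.
rewrite (_ : _ \o _ = fun p => if j == i then p.2 else tnth p.1 j); last first.
  by apply/funext => p /=; rewrite tnth_mktuple.
case: (j == i); first exact: measurable_snd.
exact: (measurableT_comp (measurable_tnth j) measurable_fst).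
Qed.

Lemma measurable_tuple_cons {dZ} (Z : measurableType dZ) m (w : Z) :
  measurable_fun setT (fun t : m.-tuple Z => [tuple of w :: t]).
Proof. by apply: measurable_cons => //; exact: measurable_cst. Qed.

Lemma norm_avg_le (R : numFieldType) m (x : 'I_m -> R) (c : R) : (0 < m)%N ->
  (forall i, `|x i| <= c) -> `|m%:R^-1 * \sum_(i < m) x i| <= c.
Proof.
move=> m0 xc; rewrite normrM ger0_norm ?invr_ge0 ?ler0n // ler_pdivrMl ?ltr0n //.
apply: le_trans (ler_norm_sum _ _ _) _; apply: le_trans (ler_sum _ (fun i _ => xc i)) _.
by rewrite sumr_const card_ord mulr_natl.
Qed.

Section iter_expect.
Context {dZ : measure_display} {Z : measurableType dZ} {R : realType}
  (P : probability Z R).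

Lemma Rintegral_prob_cst (c : R) : Rintegral P setT (fun _ => c) = c.
Proof.
by rewrite Rintegral_cst // (_ : fine _ = 1) ?mulr1 // (congr1 fine (probability_setT P)).
Qed.

Lemma bounded_integrable (f : Z -> R) (M : R) : measurable_fun setT f ->
  (forall z, `|f z| <= M) -> P.-integrable setT (EFin \o f).
Proof.
move=> mf fM; apply: measurable_bounded_integrable => //.
  by have := probability_setT P; rewrite /= => ->; rewrite ltry.
exists M; split; first exact: num_real.
by move=> y My z _; apply: le_trans (fM z) (ltW My).
Qed.

Lemma norm_Rintegral_le (f : Z -> R) (M : R) : measurable_fun setT f ->
  (forall z, `|f z| <= M) -> `|Rintegral P setT f| <= M.
Proof.
move=> mf fM.
apply: le_trans (le_normr_Rintegral measurableT (bounded_integrable mf fM)) _.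
rewrite -[leRHS]Rintegral_prob_cst; apply: le_Rintegral => //.
- apply: (@bounded_integrable _ M); first exact: measurableT_comp.
  by move=> z; rewrite normr_id.
- by apply: (@bounded_integrable _ `|M|) => // z.
Qed.

Lemma measurable_Rintegral_param {dT} (T : measurableType dT) (f : T * Z -> R) (M : R) :
  measurable_fun setT f -> (forall p, `|f p| <= M) ->
  measurable_fun setT (fun s => Rintegral P setT (fun z => f (s, z))).
Proof.
move=> mf fM.
(* shifting by [M] makes the integrand nonnegative, as Tonelli requires *)
pose g p := (f p + M)%:E.
have mg : measurable_fun setT g by apply/measurable_EFinP; exact: measurable_funD.
have g0 p : (0 <= g p)%E.
  by rewrite lee_fin -lerBlDr sub0r; have := fM p; rewrite ler_norml => /andP[].
have mfs s : measurable_fun setT (fun z => f (s, z)) by exact: measurableT_comp.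
have -> : (fun s => Rintegral P setT (fun z => f (s, z))) =
          (fun s => fine (fubini_F P g s) - M).
  apply/funext => s; rewrite [fine _](_ : _ = Rintegral P setT (fun z => f (s, z) + M)) //.
  rewrite RintegralD ?Rintegral_prob_cst ?addrK //; first exact: bounded_integrable.
  by apply: (@bounded_integrable _ `|M|) => // z.
apply: measurable_funB => //; apply: measurableT_comp => //.
exact: measurable_fun_fubini_tonelli_F.
Qed.

Lemma Rintegral_swap (f : Z * Z -> R) (M : R) : measurable_fun setT f ->
  (forall p, 0 <= f p <= M) ->
  Rintegral P setT (fun x => Rintegral P setT (fun y => f (x, y))) =
  Rintegral P setT (fun y => Rintegral P setT (fun x => f (x, y))).
Proof.
move=> mf f0M; have fM p : `|f p| <= M by case/andP: (f0M p) => f0 ?; rewrite ger0_norm.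
have fin1 x : (\int[P]_y (f (x, y))%:E)%E \is a fin_num.
  apply: integrable_fin_num => //; apply: (bounded_integrable (M := M)) => //.
  exact: (measurable_fun_pair2 _ mf).
have fin2 y : (\int[P]_x (f (x, y))%:E)%E \is a fin_num.
  apply: integrable_fin_num => //; apply: (bounded_integrable (M := M)) => //.
  exact: (measurable_fun_pair1 _ mf).
rewrite /Rintegral; congr fine.
under eq_integral do rewrite fineK //.
under [RHS]eq_integral do rewrite fineK //.
apply: (fubini_tonelli (fun p => (f p)%:E)); first exact/measurable_EFinP.
by move=> p; rewrite lee_fin; case/andP: (f0M p).
Qed.

Lemma iter_expect_ge0 m (f : m.-tuple Z -> R) :
  (forall t, 0 <= f t) -> 0 <= iter_expect P f.
Proof.
elim: m f => [|m IH] f f0 /=; first exact: f0.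
by apply: Rintegral_ge0 => z _; apply: IH.
Qed.

Lemma iter_expect_cst m (c : R) : iter_expect P (fun _ : m.-tuple Z => c) = c.
Proof.
elim: m => [|m IH] //=.
by under eq_Rintegral do rewrite IH; rewrite Rintegral_prob_cst.
Qed.

Lemma iter_expect_param m {dT} (T : measurableType dT) (f : T * m.-tuple Z -> R) (M : R) :
  measurable_fun setT f -> (forall p, `|f p| <= M) ->
  measurable_fun setT (fun s => iter_expect P (fun t => f (s, t))) /\
  forall s, `|iter_expect P (fun t => f (s, t))| <= M.
Proof.
elim: m dT T f => [|m IH] dT T f mf fM.
  by split; [exact: (measurable_fun_pair1 _ mf) | move=> s; exact: fM].
pose f' (p : (T * Z) * m.-tuple Z) := f (p.1.1, [tuple of p.1.2 :: p.2]).
have mf' : measurable_fun setT f'.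
  apply: (measurableT_comp mf); apply: measurable_fun_pair.
    exact: (measurableT_comp measurable_fst measurable_fst).
  apply: measurable_cons; last exact: measurable_snd.
  exact: (measurableT_comp measurable_snd measurable_fst).
have [mg gM] := IH _ _ f' mf' (fun p => fM _).
split; first exact: (measurable_Rintegral_param mg gM).
move=> s /=; apply: (norm_Rintegral_le (f := fun z => iter_expect P (fun t => f' ((s, z), t)))).
  exact: (measurable_fun_pair2 _ mg).
by move=> z; exact: gM.
Qed.

Lemma measurable_iter_expect_cons m (f : m.+1.-tuple Z -> R) (M : R) :
  measurable_fun setT f -> (forall t, `|f t| <= M) ->
  measurable_fun setT (fun w => iter_expect P (fun t => f [tuple of w :: t])).
Proof.
move=> mf fM.
have mf2 : measurable_fun setT (fun p : Z * m.-tuple Z => f [tuple of p.1 :: p.2]).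
  apply: (measurableT_comp mf); apply: measurable_cons.
    exact: measurable_fst.
  exact: measurable_snd.
exact: (iter_expect_param mf2 (fun p => fM _)).1.
Qed.

Lemma norm_iter_expect_le m (f : m.-tuple Z -> R) (M : R) : measurable_fun setT f ->
  (forall t, `|f t| <= M) -> `|iter_expect P f| <= M.
Proof.
elim: m f => [|m IH] f mf fM /=; first exact: fM.
apply: (norm_Rintegral_le (measurable_iter_expect_cons mf fM)) => w.
by apply: IH => [|t]; [exact: (measurableT_comp mf (measurable_tuple_cons _)) | exact: fM].
Qed.

Lemma integrable_iter_expect_cons m (f : m.+1.-tuple Z -> R) (M : R) :
  measurable_fun setT f -> (forall t, `|f t| <= M) ->
  P.-integrable setT (EFin \o (fun w => iter_expect P (fun t => f [tuple of w :: t]))).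
Proof.
move=> mf fM; apply: (bounded_integrable (measurable_iter_expect_cons mf fM)) => w.
by apply: norm_iter_expect_le => [|t]; [exact: (measurableT_comp mf (measurable_tuple_cons _)) | exact: fM].
Qed.

Lemma iter_expect_lincomb m (f g : m.-tuple Z -> R) (Mf Mg a b : R) :
  measurable_fun setT f -> measurable_fun setT g ->
  (forall t, `|f t| <= Mf) -> (forall t, `|g t| <= Mg) ->
  iter_expect P (fun t => a * f t + b * g t) =
  a * iter_expect P f + b * iter_expect P g.
Proof.
elim: m f g => [|m IH] f g mf mg fM gM //=.
have mcons (k : m.+1.-tuple Z -> R) (w : Z) : measurable_fun setT k ->
    measurable_fun setT (fun t : m.-tuple Z => k [tuple of w :: t]).
  by move=> mk; exact: measurableT_comp mk (measurable_tuple_cons _).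
under eq_Rintegral => w _
  do rewrite (IH _ _ (mcons _ w mf) (mcons _ w mg) (fun _ => fM _) (fun _ => gM _)).
have iZ c (k : Z -> R) : P.-integrable setT (EFin \o k) ->
    P.-integrable setT (EFin \o (fun x => c * k x)).
  move=> ik; rewrite (_ : _ \o _ = (fun x => c%:E * (EFin \o k) x)%E).
    exact: integrableZl.
  by apply/funext => x; rewrite /= EFinM.
have iF := integrable_iter_expect_cons mf fM.
have iG := integrable_iter_expect_cons mg gM.
by rewrite RintegralD ?RintegralZl //; apply: iZ.
Qed.

Lemma iter_expectZ m (f : m.-tuple Z -> R) (M a : R) : measurable_fun setT f ->
  (forall t, `|f t| <= M) -> iter_expect P (fun t => a * f t) = a * iter_expect P f.
Proof.
move=> mf fM; transitivity (iter_expect P (fun t => a * f t + 0 * f t)).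
  by congr iter_expect; apply/funext => t; rewrite mul0r addr0.
by rewrite (iter_expect_lincomb _ _ mf mf fM fM) mul0r addr0.
Qed.

Lemma iter_expectB m (f g : m.-tuple Z -> R) (Mf Mg : R) :
  measurable_fun setT f -> measurable_fun setT g ->
  (forall t, `|f t| <= Mf) -> (forall t, `|g t| <= Mg) ->
  iter_expect P (fun t => f t - g t) = iter_expect P f - iter_expect P g.
Proof.
move=> mf mg fM gM; transitivity (iter_expect P (fun t => 1 * f t + (-1) * g t)).
  by congr iter_expect; apply/funext => t; rewrite mul1r mulN1r.
by rewrite (iter_expect_lincomb _ _ mf mg fM gM) mul1r mulN1r.
Qed.

Lemma iter_expect_sum m (I : Type) (s : seq I) (G : I -> m.-tuple Z -> R) (M : R) :
  (forall i, measurable_fun setT (G i)) -> (forall i t, `|G i t| <= M) ->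
  iter_expect P (fun t => \sum_(i <- s) G i t) = \sum_(i <- s) iter_expect P (G i).
Proof.
move=> mG GM; elim: s => [|i s IH].
  by under [X in iter_expect P X]funext do rewrite big_nil; rewrite iter_expect_cst big_nil.
under [X in iter_expect P X]funext do rewrite big_cons -[G i _]mul1r -[\sum_(_ <- _) _]mul1r.
rewrite (iter_expect_lincomb (Mf := M) (Mg := \sum_(j <- s) M)) //.
- by rewrite !mul1r IH big_cons.
- exact: measurable_sum.
- by move=> t; apply: le_trans (ler_norm_sum _ _ _) _; exact: ler_sum.
Qed.

Lemma iter_expect_Rintegral m (F : m.-tuple Z * Z -> R) (M : R) :
  measurable_fun setT F -> (forall p, 0 <= F p <= M) ->
  iter_expect P (fun t => Rintegral P setT (fun z => F (t, z))) =
  Rintegral P setT (fun z => iter_expect P (fun t => F (t, z))).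
Proof.
elim: m F => [|m IH] F mF F0M //=.
have FM p : `|F p| <= M by case/andP: (F0M p) => F0 ?; rewrite ger0_norm.
have mFw w : measurable_fun setT (fun p : m.-tuple Z * Z => F ([tuple of w :: p.1], p.2)).
  apply: (measurableT_comp mF); apply: measurable_fun_pair => //.
  exact: (measurableT_comp (measurable_tuple_cons w) measurable_fst).
under eq_Rintegral => w _ do rewrite (IH _ (mFw w) (fun _ => F0M _)).
have mG : measurable_fun setT
    (fun p : (Z * Z) * m.-tuple Z => F ([tuple of p.1.1 :: p.2], p.1.2)).
  apply: (measurableT_comp mF); apply: measurable_fun_pair.
    apply: measurable_cons; last exact: measurable_snd.
    exact: (measurableT_comp measurable_fst measurable_fst).
  exact: (measurableT_comp measurable_snd measurable_fst).
have [mPsi bPsi] := iter_expect_param mG (fun _ => FM _).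
apply: (Rintegral_swap mPsi) => q; rewrite iter_expect_ge0 /=.
  exact: le_trans (ler_norm _) (bPsi q).
by move=> t; case/andP: (F0M ([tuple of q.1 :: t], q.2)).
Qed.

Lemma iter_expect_resample m (F : m.-tuple Z * Z -> R) (M : R) (i : 'I_m) :
  measurable_fun setT F -> (forall p, 0 <= F p <= M) ->
  iter_expect P (fun t => Rintegral P setT (fun z => F (tuple_upd t i z, tnth t i))) =
  iter_expect P (fun t => Rintegral P setT (fun z => F (t, z))).
Proof.
elim: m F i => [|m IH] F i mF F0M; first by case: i.
have FM p : `|F p| <= M by case/andP: (F0M p) => F0 ?; rewrite ger0_norm.
have mFw w : measurable_fun setT (fun p : m.-tuple Z * Z => F ([tuple of w :: p.1], p.2)).
  apply: (measurableT_comp mF); apply: measurable_fun_pair => //.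
  exact: (measurableT_comp (measurable_tuple_cons w) measurable_fst).
case: (unliftP ord0 i) => [j ->|->] /=.
  apply: eq_Rintegral => w _; rewrite -(IH _ j (mFw w) (fun _ => F0M _)).
  congr iter_expect; apply/funext => t; apply: eq_Rintegral => z _.
  by rewrite tuple_updS (tnthS w t j).
have mG : measurable_fun setT
    (fun p : (Z * Z) * m.-tuple Z => F ([tuple of p.1.1 :: p.2], p.1.2)).
  apply: (measurableT_comp mF); apply: measurable_fun_pair.
    apply: measurable_cons; last exact: measurable_snd.
    exact: (measurableT_comp measurable_fst measurable_fst).
  exact: (measurableT_comp measurable_snd measurable_fst).
have [mPsi bPsi] := iter_expect_param mG (fun _ => FM _).
have mH w : measurable_fun setT (fun p : m.-tuple Z * Z => F ([tuple of p.2 :: p.1], w)).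
  apply: (measurableT_comp mF); apply: measurable_fun_pair => //.
  by apply: measurable_cons; [exact: measurable_snd | exact: measurable_fst].
transitivity (Rintegral P setT (fun w => Rintegral P setT (fun z =>
    iter_expect P (fun t => F ([tuple of z :: t], w))))).
  apply: eq_Rintegral => w _; rewrite -(iter_expect_Rintegral (mH w) (fun _ => F0M _)).
  congr iter_expect; apply/funext => t; apply: eq_Rintegral => z _.
  by rewrite tuple_upd0 tnth0.
transitivity (Rintegral P setT (fun w => Rintegral P setT (fun z =>
    iter_expect P (fun t => F ([tuple of w :: t], z))))); last first.
  apply: eq_Rintegral => w _.
  by rewrite -(iter_expect_Rintegral (mFw w) (fun _ => F0M _)).
apply: (Rintegral_swap (measurableT_comp mPsi (@measurable_swap _ _ Z Z))) => q.
rewrite iter_expect_ge0 /=; first exact: le_trans (ler_norm _) (bPsi (q.2, q.1)).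
by move=> t; case/andP: (F0M ([tuple of q.2 :: t], q.1)).
Qed.

Lemma replace_one_gap_le m (F : m.-tuple Z * Z -> R) (M B : R) : (0 < m)%N ->
  measurable_fun setT F -> (forall p, 0 <= F p <= M) ->
  (forall t i z z', `|F (t, z') - F (tuple_upd t i z, z')| <= B) ->
  `|iter_expect P (fun t => m%:R^-1 * \sum_(i < m) F (t, tnth t i)
                          - Rintegral P setT (fun z => F (t, z)))| <= B.
Proof.
move=> m0 mF F0M stab.
have FM p : `|F p| <= M by case/andP: (F0M p) => F0 ?; rewrite ger0_norm.
pose A i t := F (t, tnth t i).
pose E t := Rintegral P setT (fun z => F (t, z)).
pose C i t := Rintegral P setT (fun z => F (tuple_upd t i z, tnth t i)).
have mA i : measurable_fun setT (A i).
  apply: (measurableT_comp mF); apply: measurable_fun_pair => //.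
  exact: measurable_tnth.
have mE : measurable_fun setT E := measurable_Rintegral_param mF FM.
have mC i : measurable_fun setT (C i).
  apply: (measurable_Rintegral_param
    (f := fun p => F (tuple_upd p.1 i p.2, tnth p.1 i)) _ (fun p => FM _)).
  apply: (measurableT_comp mF); apply: measurable_fun_pair.
    exact: measurable_tuple_upd.
  exact: (measurableT_comp (measurable_tnth i) measurable_fst).
have mCz t i : measurable_fun setT (fun z => F (tuple_upd t i z, tnth t i)).
  apply: (measurableT_comp mF); apply: measurable_fun_pair => //.
  exact: (measurableT_comp (measurable_tuple_upd i) (pair1_measurable t)).
have AM i t : `|A i t| <= M := FM _.
have EM t : `|E t| <= M.
  exact: norm_Rintegral_le (measurableT_comp mF (pair1_measurable t)) (fun _ => FM _).
have CM i t : `|C i t| <= M := norm_Rintegral_le (mCz t i) (fun _ => FM _).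
have AC i t : `|A i t - C i t| <= B.
  rewrite /A /C -[F (t, tnth t i)]Rintegral_prob_cst -RintegralB //.
  - by apply: norm_Rintegral_le => [|z]; [exact: measurable_funB | exact: stab].
  - exact: (bounded_integrable (f := fun=> F (t, tnth t i)) (measurable_cst _) (fun=> lexx _)).
  - exact: bounded_integrable (mCz t i) (fun _ => FM _).
have AEM i t : `|A i t - E t| <= M + M.
  exact: le_trans (ler_normB _ _) (lerD (AM i t) (EM t)).
have -> : (fun t => m%:R^-1 * \sum_(i < m) F (t, tnth t i) - E t) =
          (fun t => m%:R^-1 * \sum_(i < m) (A i t - E t)).
  apply/funext => t; rewrite sumrB sumr_const card_ord mulrBr; congr (_ - _).
  by rewrite -[E t *+ m]mulr_natl mulrA mulVf ?mul1r // pnatr_eq0 -lt0n.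
have mS : measurable_fun setT (fun t => \sum_(i < m) (A i t - E t)).
  by apply: measurable_sum => i; exact: measurable_funB.
have SM t : `|\sum_(i < m) (A i t - E t)| <= \sum_(i < m) (M + M).
  by apply: le_trans (ler_norm_sum _ _ _) _; exact: ler_sum.
rewrite (@iter_expectZ _ _ _ _ mS SM).
rewrite (@iter_expect_sum _ _ _ _ _ (fun i => measurable_funB (mA i) mE) AEM).
apply: norm_avg_le => // i.
rewrite (iter_expectB (mA i) mE (AM i) EM) -(iter_expect_resample i mF F0M).
rewrite -(iter_expectB (mA i) (mC i) (AM i) (CM i)).
exact: norm_iter_expect_le (measurable_funB (mA i) (mC i)) (AC i).
Qed.
End iter_expect.

Lemma ler_norm_sub_itv01 (R : realDomainType) (a b : R) :
  0 <= a <= 1 -> 0 <= b <= 1 -> `|a - b| <= 1.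
Proof. by case/andP=> ? ? /andP[? ?]; rewrite ler_norml; apply/andP; split; lra. Qed.

Lemma le_sqrt_itv01 (R : rcfType) (x y : R) : 0 <= x <= 1 -> x <= y -> x <= Num.sqrt y.
Proof.
case/andP=> x0 x1 xy; rewrite -(ger0_norm x0) -sqrtr_sqr ler_wsqrtr //.
by apply: le_trans xy; rewrite expr2 ler_piMr.
Qed.

Lemma ler_M_max0l (R : realDomainType) (L a b : R) :
  0 <= a <= b -> L * a <= Num.max 0 L * b.
Proof.
case/andP=> a0 ab; have [L0|L0] := leP 0 L; first by rewrite ler_wpM2l.
by rewrite mul0r nmulr_rle0.
Qed.

Lemma eucl_norm_le_sqrt_dim (R : realType) d (v : 'rV[R]_d) (b : R) :
  eucl_norm v ^+ 2 <= b ^+ 2 -> eucl_norm v <= Num.sqrt (d%:R * b ^+ 2).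
Proof.
case: d v => [|d] v vb; first by rewrite /eucl_norm big_ord0 sqrtr0 sqrtr_ge0.
have v0 : 0 <= eucl_norm v := sqrtr_ge0 _.
rewrite -(ger0_norm v0) -sqrtr_sqr ler_wsqrtr //; apply: le_trans vb _.
by rewrite ler_peMl ?sqr_ge0 // ler1n.
Qed.

Lemma stability_bound_le (R : rcfType) (n d : nat) (L beta beta1 : R) :
  (2 <= n)%N -> 0 <= L ->
  L * Num.sqrt (d%:R * beta1 ^+ 2) <=
  4 * (n%:R / (n%:R - 1)) * L *
    Num.sqrt (n%:R * d%:R * (n%:R * beta ^+ 2 + 2 * beta1 ^+ 2)).
Proof.
move=> n2 L0; have nR : 2 <= n%:R :> R by rewrite ler_nat.
set S := Num.sqrt (n%:R * d%:R * _).
have sS : Num.sqrt (d%:R * beta1 ^+ 2) <= S.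
  have d0 : 0 <= d%:R :> R := ler0n _ _.
  have Q0 : 0 <= n%:R * beta ^+ 2 + 2 * beta1 ^+ 2.
    by have := sqr_ge0 beta; have := sqr_ge0 beta1; nra.
  have b1Q : beta1 ^+ 2 <= n%:R * beta ^+ 2 + 2 * beta1 ^+ 2.
    by have := sqr_ge0 beta; have := sqr_ge0 beta1; nra.
  rewrite ler_wsqrtr // [n%:R * _]mulrC -mulrA ler_wpM2l //.
  by apply/(le_trans b1Q); rewrite ler_peMl //; lra.
have c1 : 1 <= n%:R / (n%:R - 1) :> R by rewrite ler_pdivlMr ?mul1r; lra.
have LS0 : 0 <= L * S := mulr_ge0 L0 (sqrtr_ge0 _).
apply: le_trans (ler_wpM2l L0 sS) _.
by move: c1 LS0; set c := _ / _; nra.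
Qed.

Lemma differ_at_most_at_upd {dX dY} {X : measurableType dX} {Y : measurableType dY}
  m (t : m.-tuple (X * Y)) (i : 'I_m) (z : X * Y) :
  differ_at_most_at t (tuple_upd t i z) i.
Proof. by move=> k ki; rewrite tnth_mktuple (negbTE ki). Qed.
Arguments differ_at_most_at_upd {dX dY X Y m} t i z.

Theorem theorem5 (dX dY : measure_display) (X : measurableType dX)
  (Y : measurableType dY) (R : realType) (n d : nat) (hn : (2 <= n)%N)
  (P : probability (X * Y)%type R)
  (h : (n.-1).-tuple (X * Y)%type -> X -> 'rV[R]_d)
  (l : 'rV[R]_d -> Y -> R) (beta beta1 L : R)
  (hmeas : measurable_fun [set: ((n.-1).-tuple (X * Y)%type * (X * Y))%type]
             (fun p => l (h p.1 p.2.1) p.2.2))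
  (hl01 : forall r y, 0 <= l r y <= 1)
  (hlip : forall r r' y, `|l r y - l r' y| <= L * eucl_norm (r - r'))
  (htrain : train_stable h beta)
  (htest : test_stable h beta1) :
  gen P h l <=
    Num.sqrt (4 * (n%:R / (n%:R - 1)) * L *
      Num.sqrt (n%:R * d%:R * (n%:R * beta ^+ 2 + 2 * beta1 ^+ 2))).
Proof.
pose F (p : (n.-1).-tuple (X * Y) * (X * Y)) := l (h p.1 p.2.1) p.2.2.
have m0 : (0 < n.-1)%N by rewrite -ltnS prednK // (leq_trans _ hn).
have F01 p : 0 <= F p <= 1 := hl01 _ _.
have gap B : (forall t i z z', `|F (t, z') - F (tuple_upd t i z, z')| <= B) ->
    gen P h l <= B.
  exact: (replace_one_gap_le P m0 hmeas F01).
have gen1 : gen P h l <= 1.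
  by apply: gap => t i z z'; exact: ler_norm_sub_itv01 (F01 _) (F01 _).
have genL : gen P h l <= Num.max 0 L * Num.sqrt (d%:R * beta1 ^+ 2).
  apply: gap => t i z z'; apply: le_trans (hlip _ _ _) (ler_M_max0l _ _).
  rewrite sqrtr_ge0 eucl_norm_le_sqrt_dim //.
  exact: htest _ _ _ (differ_at_most_at_upd t i z) z'.1.
move: genL; have [L0 genL|_] := leP 0 L; last first.
  by rewrite mul0r => gen0; apply: le_trans gen0 (sqrtr_ge0 _).
apply: le_sqrt_itv01; first by rewrite normr_ge0 gen1.
exact: le_trans genL (stability_bound_le _ _ _ hn L0).
Qed.
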